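(* Let $\mathcal{B}$ be an AF $C^*$-algebra and $\mathcal{A}$ a canonical subalgebra of $\mathcal{B}$. If $\delta:\mathcal{A}\to\mathcal{B}$ is a bounded linear map with $(m+n+l)\delta(A^2)=m\delta(A)A+nA\delta(A)+lA\delta(I)A$ for all $A\in\mathcal{A}$, then $\delta(AB)=\delta(A)B=A\delta(B)$ for all $A,B\in\mathcal{A}$.
   Context: Fixed integers $m,n,l\ge 0$ satisfy $m+l\ge1$ and $n+l\ge1$. A unital $C^*$-algebra $\mathcal{B}$ is AF if it contains an increasing chain $\mathcal{B}_1\subseteq\mathcal{B}_2\subseteq\cdots$ of finite-dimensional $C^*$-subalgebras, each containing the unit $I$, whose union is norm dense. A canonical subalgebra $\mathcal{A}$ of $\mathcal{B}$ is a norm-closed subalgebra such that, for such a chain with compatible systems of matrix units (each $\mathcal{B}_k\cong M_{n_1}(\mathbb{C})\oplus\cdots\oplus M_{n_r}(\mathbb{C})$), each $\mathcal{A}_k=\mathcal{A}\cap\mathcal{B}_k$ is a CSL subalgebra of $\mathcal{B}_k$ (containing the diagonal matrix units and spanned by the matrix units it contains) and $\bigcup_k\mathcal{A}_k$ is norm dense in $\mathcal{A}$. *)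

From Stdlib Require Import Reals Arith.
Open Scope R_scope.

Record Cplx := mkC { re : R ; im : R }.
Definition C0 : Cplx := mkC 0 0.
Definition C1 : Cplx := mkC 1 0.
Definition Cadd (a b : Cplx) : Cplx := mkC (re a + re b) (im a + im b).
Definition Cmul (a b : Cplx) : Cplx :=
  mkC (re a * re b - im a * im b) (re a * im b + im a * re b).
Definition Cconj (a : Cplx) : Cplx := mkC (re a) (- im a).
Definition Cabs (a : Cplx) : R := sqrt (re a * re a + im a * im a).
Definition Cnat (k : nat) : Cplx := mkC (INR k) 0.

Record CstarAlgebra := {
  car :> Type;
  zero : car; one : car;
  add : car -> car -> car; opp : car -> car;
  mul : car -> car -> car;
  smul : Cplx -> car -> car;
  star : car -> car;
  norm : car -> R;
  add_assoc : forall x y z, add x (add y z) = add (add x y) z;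
  add_comm : forall x y, add x y = add y x;
  add_0 : forall x, add x zero = x;
  add_opp : forall x, add x (opp x) = zero;
  smul_1 : forall x, smul C1 x = x;
  smul_assoc : forall a b x, smul a (smul b x) = smul (Cmul a b) x;
  smul_addl : forall a b x, smul (Cadd a b) x = add (smul a x) (smul b x);
  smul_addr : forall a x y, smul a (add x y) = add (smul a x) (smul a y);
  mul_assoc : forall x y z, mul x (mul y z) = mul (mul x y) z;
  mul_1l : forall x, mul one x = x;
  mul_1r : forall x, mul x one = x;
  mul_addl : forall x y z, mul (add x y) z = add (mul x z) (mul y z);
  mul_addr : forall x y z, mul x (add y z) = add (mul x y) (mul x z);
  mul_smull : forall a x y, mul (smul a x) y = smul a (mul x y);
  mul_smulr : forall a x y, mul x (smul a y) = smul a (mul x y);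
  star_add : forall x y, star (add x y) = add (star x) (star y);
  star_smul : forall a x, star (smul a x) = smul (Cconj a) (star x);
  star_mul : forall x y, star (mul x y) = mul (star y) (star x);
  star_star : forall x, star (star x) = x;
  norm_eq0 : forall x, norm x = 0 <-> x = zero;
  norm_triangle : forall x y, norm (add x y) <= norm x + norm y;
  norm_smul : forall a x, norm (smul a x) = Cabs a * norm x;
  norm_submul : forall x y, norm (mul x y) <= norm x * norm y;
  norm_cstar : forall x, norm (mul (star x) x) = norm x * norm x;
  complete : forall u : nat -> car,
    (forall eps, eps > 0 -> exists N, forall p q, (N <= p)%nat -> (N <= q)%nat ->
        norm (add (u p) (opp (u q))) < eps) ->
    exists lim, forall eps, eps > 0 -> exists N, forall p, (N <= p)%nat ->
        norm (add (u p) (opp lim)) < eps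
}.

Arguments zero {_}. Arguments one {_}. Arguments add {_} _ _. Arguments opp {_} _.
Arguments mul {_} _ _. Arguments smul {_} _ _. Arguments star {_} _.
Arguments norm {_} _.

Definition sub {B : CstarAlgebra} (x y : B) : B := add x (opp y).

Fixpoint fsum {B : CstarAlgebra} (k : nat) (f : nat -> B) : B :=
  match k with O => zero | S k' => add (fsum k' f) (f k') end.

(* ---------- systems of matrix units ----------
   A system u with r blocks of sizes n_0,...,n_{r-1} and matrix units
   e s i j (s < r, i,j < n_s); its span is a finite-dimensional
   C*-subalgebra containing I isomorphic to M_{n_0} (+) ... (+) M_{n_{r-1}}. *)
Record MUsys (X : Type) := { mu_r : nat; mu_n : nat -> nat; mu_e : nat -> nat -> nat -> X }.
Arguments mu_r {_} _. Arguments mu_n {_} _ _. Arguments mu_e {_} _ _ _ _.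

Definition idx {X} (u : MUsys X) (s i j : nat) : Prop :=
  (s < mu_r u)%nat /\ (i < mu_n u s)%nat /\ (j < mu_n u s)%nat.

Definition is_mu_system {B : CstarAlgebra} (u : MUsys B) : Prop :=
  (forall s, (s < mu_r u)%nat -> (1 <= mu_n u s)%nat) /\
  (forall s i, (s < mu_r u)%nat -> (i < mu_n u s)%nat -> mu_e u s i i <> zero) /\
  (forall s i j t k l, idx u s i j -> idx u t k l ->
     mul (mu_e u s i j) (mu_e u t k l) =
       if (Nat.eqb s t && Nat.eqb j k)%bool then mu_e u s i l else zero) /\
  (forall s i j, idx u s i j -> star (mu_e u s i j) = mu_e u s j i) /\
  fsum (mu_r u) (fun s => fsum (mu_n u s) (fun i => mu_e u s i i)) = one.

Definition lin_comb {B : CstarAlgebra} (u : MUsys B) (c : nat -> nat -> nat -> Cplx) : B :=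
  fsum (mu_r u) (fun s => fsum (mu_n u s) (fun i => fsum (mu_n u s) (fun j =>
     smul (c s i j) (mu_e u s i j)))).

Definition in_span {B : CstarAlgebra} (u : MUsys B) (x : B) : Prop :=
  exists c, x = lin_comb u c.

Definition compatible {B : CstarAlgebra} (u v : MUsys B) : Prop :=
  forall s i j, idx u s i j ->
    exists c, (forall t a b, c t a b = C0 \/ c t a b = C1) /\
              mu_e u s i j = lin_comb v c.

(* an increasing chain of unital finite-dim C*-subalgebras, with compatible
   systems of matrix units, whose union is norm dense *)
Definition AF_chain (B : CstarAlgebra) (ch : nat -> MUsys B) : Prop :=
  (forall k, is_mu_system (ch k)) /\
  (forall k, compatible (ch k) (ch (S k))) /\
  (forall x : B, forall eps, eps > 0 ->
     exists k y, in_span (ch k) y /\ norm (sub x y) < eps).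

Definition is_AF (B : CstarAlgebra) : Prop := exists ch, AF_chain B ch.

Definition closed_subalgebra (B : CstarAlgebra) (A : B -> Prop) : Prop :=
  A zero /\
  (forall x y, A x -> A y -> A (add x y)) /\
  (forall a x, A x -> A (smul a x)) /\
  (forall x y, A x -> A y -> A (mul x y)) /\
  (forall (u : nat -> B) lim, (forall p, A (u p)) ->
     (forall eps, eps > 0 -> exists N, forall p, (N <= p)%nat -> norm (sub (u p) lim) < eps) ->
     A lim).

(* A ∩ B_k is a CSL subalgebra of B_k: contains the diagonal matrix units
   and is spanned by the matrix units it contains *)
Definition csl_part {B : CstarAlgebra} (A : B -> Prop) (u : MUsys B) : Prop :=
  (forall s i, (s < mu_r u)%nat -> (i < mu_n u s)%nat -> A (mu_e u s i i)) /\
  (forall x, (A x /\ in_span u x) <->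
     exists c, x = lin_comb u c /\
       (forall s i j, idx u s i j -> ~ A (mu_e u s i j) -> c s i j = C0)).

Definition canonical_subalgebra (B : CstarAlgebra) (A : B -> Prop) : Prop :=
  closed_subalgebra B A /\
  exists ch, AF_chain B ch /\
    (forall k, csl_part A (ch k)) /\
    (forall x, A x -> forall eps, eps > 0 ->
       exists k y, A y /\ in_span (ch k) y /\ norm (sub x y) < eps).

(* delta : A -> B, represented as a total function whose values off A are irrelevant *)
Definition linear_on (B : CstarAlgebra) (A : B -> Prop) (d : B -> B) : Prop :=
  (forall x y, A x -> A y -> d (add x y) = add (d x) (d y)) /\
  (forall a x, A x -> d (smul a x) = smul a (d x)).

Definition bounded_on (B : CstarAlgebra) (A : B -> Prop) (d : B -> B) : Prop :=
  exists M, forall x, A x -> norm (d x) <= M * norm x.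

From Pilot Require Import Defs.
From Stdlib Require Import Reals Arith ZArith Lia Lra Classical Ring.
Open Scope R_scope.

(* Put T := delta(I).  Applying the identity to A and to A + I and
   subtracting linearizes it:
       (m+n+2l) delta(A) = (m+l) T A + (n+l) A T          for every A in the algebra.
   Feeding this back into the identity for an idempotent P gives
   (m+l)(n+l) (T P + P T - 2 P T P) = 0, and multiplying by P on either side
   yields T P = P T.  Every matrix unit e_ij lying in a canonical subalgebra is a
   difference of the idempotents e_ii + e_ij and e_ii, which lie in it too, so T
   commutes with the finite-dimensional pieces A_k, hence (the commutant of T being
   norm closed) with the whole algebra. *)

Arguments add_assoc {_}.    Arguments add_comm {_}.   Arguments add_0 {_}.
Arguments add_opp {_}.      Arguments smul_1 {_}.     Arguments smul_assoc {_}.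
Arguments smul_addl {_}.    Arguments smul_addr {_}.  Arguments mul_assoc {_}.
Arguments mul_1l {_}.       Arguments mul_1r {_}.     Arguments mul_addl {_}.
Arguments mul_addr {_}.     Arguments mul_smull {_}.  Arguments mul_smulr {_}.
Arguments norm_eq0 {_}.     Arguments norm_triangle {_}.
Arguments norm_smul {_}.    Arguments norm_submul {_}.

Section Algebra.
Variable B : CstarAlgebra.

Lemma add_0l (x : B) : add zero x = x.
Proof. rewrite add_comm; apply add_0. Qed.

Lemma add_cancel_l (x y z : B) : add x y = add x z -> y = z.
Proof.
  intro H. apply (f_equal (add (opp x))) in H.
  rewrite !add_assoc, (add_comm (opp x) x), add_opp, !add_0l in H. exact H.
Qed.

Lemma add_interchange (a b c d : B) : add (add a b) (add c d) = add (add a c) (add b d).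
Proof.
  rewrite <- !add_assoc. f_equal. rewrite !add_assoc. f_equal. apply add_comm.
Qed.

Lemma sub_eq0 (y z : B) : add y (opp z) = zero -> y = z.
Proof.
  intro H. apply (f_equal (fun w => add w z)) in H.
  rewrite <- add_assoc, (add_comm (opp z) z), add_opp, add_0, add_0l in H. exact H.
Qed.

Lemma smul_zero (a : Cplx) : smul a (@zero B) = zero.
Proof. apply (add_cancel_l (smul a zero)). rewrite <- smul_addr, !add_0. reflexivity. Qed.

Lemma smul_C0 (x : B) : smul Defs.C0 x = zero.
Proof.
  apply norm_eq0. rewrite norm_smul. unfold Cabs; simpl.
  replace (0 * 0 + 0 * 0) with 0 by ring. rewrite sqrt_0. ring.
Qed.

Lemma mul_zero_r (x : B) : mul x zero = zero.
Proof. apply (add_cancel_l (mul x zero)). rewrite <- mul_addr, !add_0. reflexivity. Qed.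

Lemma mul_zero_l (x : B) : mul zero x = zero.
Proof. apply (add_cancel_l (mul zero x)). rewrite <- mul_addl, !add_0. reflexivity. Qed.

Lemma nsmul_add (a b : nat) (x : B) :
  add (smul (Cnat a) x) (smul (Cnat b) x) = smul (Cnat (a + b)) x.
Proof.
  rewrite <- smul_addl. f_equal. unfold Cadd, Cnat; simpl.
  rewrite plus_INR. f_equal; ring.
Qed.

Lemma nsmul_inj (k : nat) (x y : B) :
  (1 <= k)%nat -> smul (Cnat k) x = smul (Cnat k) y -> x = y.
Proof.
  intros Hk H. apply (f_equal (smul (mkC (/ INR k) 0))) in H.
  assert (Hk0 : INR k <> 0) by (apply not_0_INR; lia).
  assert (Hinv : Cmul (mkC (/ INR k) 0) (Cnat k) = Defs.C1).
  { unfold Cmul, Cnat, Defs.C1; simpl. f_equal; field; auto. }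
  rewrite !smul_assoc, Hinv, !smul_1 in H. exact H.
Qed.

Lemma norm_opp (x : B) : norm (opp x) = norm x.
Proof.
  assert (Hopp : opp x = smul (mkC (-1) 0) x).
  { apply (add_cancel_l x). rewrite add_opp.
    rewrite <- (smul_1 x) at 1. rewrite <- smul_addl.
    unfold Cadd, Defs.C1; simpl. replace (1 + -1) with 0 by ring.
    replace (0 + 0) with 0 by ring. symmetry; apply smul_C0. }
  rewrite Hopp, norm_smul. unfold Cabs; simpl.
  replace (-1 * -1 + 0 * 0) with 1 by ring. rewrite sqrt_1. ring.
Qed.

Lemma norm_nonneg (x : B) : 0 <= norm x.
Proof.
  pose proof (norm_triangle x (opp x)) as H. rewrite add_opp, norm_opp in H.
  assert (norm (@zero B) = 0) by (apply norm_eq0; reflexivity). lra.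
Qed.

Lemma zero_of_small_norm (x : B) : (forall eps, eps > 0 -> norm x <= eps) -> x = zero.
Proof.
  intro H. apply norm_eq0. pose proof (norm_nonneg x) as Hx.
  destruct (Rle_lt_or_eq_dec 0 (norm x) Hx) as [Hp | Hp]; auto.
  specialize (H (norm x / 2) ltac:(lra)). lra.
Qed.

Definition zsmul (z : Z) (x : B) : B := smul (mkC (IZR z) 0) x.

Lemma zsmul_addl a b x : zsmul (a + b)%Z x = add (zsmul a x) (zsmul b x).
Proof.
  unfold zsmul. rewrite <- smul_addl. f_equal. unfold Cadd; simpl.
  rewrite plus_IZR. f_equal; ring.
Qed.

Lemma zsmul_addr a x y : zsmul a (add x y) = add (zsmul a x) (zsmul a y).
Proof. apply smul_addr. Qed.

Lemma zsmul_assoc a b x : zsmul a (zsmul b x) = zsmul (a * b)%Z x.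
Proof.
  unfold zsmul. rewrite smul_assoc. f_equal. unfold Cmul; simpl.
  rewrite mult_IZR. f_equal; ring.
Qed.

(* The trivial extension Ext = Z x B, with (a, x)(b, y) = (ab, a.y + b.x), is a
   commutative ring in which B is a square-zero ideal; identities between integer
   linear combinations of elements of B are therefore decided by [ring] on Ext.
   (Products in B itself are opaque atoms for this purpose.) *)
Definition Ext := (Z * B)%type.
Definition eadd (p q : Ext) : Ext := (Z.add (fst p) (fst q), add (snd p) (snd q)).
Definition emul (p q : Ext) : Ext :=
  (Z.mul (fst p) (fst q), add (zsmul (fst p) (snd q)) (zsmul (fst q) (snd p))).
Definition eopp (p : Ext) : Ext := (Z.opp (fst p), opp (snd p)).
Definition esub (p q : Ext) : Ext := eadd p (eopp q).
Definition e0 : Ext := (0%Z, zero).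
Definition e1 : Ext := (1%Z, zero).

Lemma Ext_ring : ring_theory e0 e1 eadd emul esub eopp (@eq Ext).
Proof.
  constructor.
  - intros [a x]. unfold eadd; simpl. rewrite add_0l. reflexivity.
  - intros [a x] [b y]. unfold eadd; simpl. rewrite Z.add_comm, add_comm. reflexivity.
  - intros [a x] [b y] [c z]. unfold eadd; simpl.
    rewrite Z.add_assoc, add_assoc. reflexivity.
  - intros [a x]. unfold emul, zsmul; simpl.
    rewrite smul_1, smul_zero, add_0. destruct a; reflexivity.
  - intros [a x] [b y]. unfold emul; simpl. rewrite Z.mul_comm, add_comm. reflexivity.
  - intros [a x] [b y] [c z]. unfold emul; simpl.
    rewrite !zsmul_addr, !zsmul_assoc, Z.mul_assoc, <- !add_assoc.
    rewrite (Z.mul_comm c a), (Z.mul_comm c b). reflexivity.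
  - intros [a x] [b y] [c z]. unfold emul, eadd; simpl.
    rewrite zsmul_addl, zsmul_addr, add_interchange, Z.mul_add_distr_r. reflexivity.
  - reflexivity.
  - intros [a x]. unfold eadd, eopp; simpl. rewrite Z.add_opp_diag_r, add_opp. reflexivity.
Qed.

Add Ring ExtRing : Ext_ring.

Definition embed (x : B) : Ext := (0%Z, x).
Definition ncst (k : nat) : Ext := (Z.of_nat k, zero).

Lemma embed_add x y : embed (add x y) = eadd (embed x) (embed y).
Proof. reflexivity. Qed.

Lemma embed_opp x : embed (opp x) = eopp (embed x).
Proof. reflexivity. Qed.

Lemma embed_nsmul k x : embed (smul (Cnat k) x) = emul (ncst k) (embed x).
Proof.
  unfold embed, ncst, emul, zsmul, Cnat; simpl.
  rewrite Z.mul_0_r, smul_zero, add_0, INR_IZR_INZ. reflexivity.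
Qed.

Lemma ncst_add a b : ncst (a + b) = eadd (ncst a) (ncst b).
Proof. unfold ncst, eadd; simpl. rewrite Nat2Z.inj_add, add_0. reflexivity. Qed.

Lemma ncst_mul a b : ncst (a * b) = emul (ncst a) (ncst b).
Proof.
  unfold ncst, emul, zsmul; simpl. rewrite Nat2Z.inj_mul, !smul_zero, add_0.
  reflexivity.
Qed.

Lemma embed_inj x y : embed x = embed y -> x = y.
Proof. intro H. exact (f_equal snd H). Qed.

Lemma embed_cancel (k : nat) (x y : B) :
  (1 <= k)%nat -> emul (ncst k) (esub (embed x) (embed y)) = e0 -> x = y.
Proof.
  intros Hk H. apply (f_equal snd) in H.
  unfold emul, ncst, esub, eadd, eopp, embed, zsmul in H; simpl in H.
  rewrite smul_C0, add_0, <- INR_IZR_INZ in H. fold (Cnat k) in H.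
  apply sub_eq0. apply (nsmul_inj k); [exact Hk |]. rewrite H. symmetry; apply smul_zero.
Qed.

Lemma eq_by_combination2 (L R L1 R1 L2 R2 c1 c2 : Ext) :
  L1 = R1 -> L2 = R2 ->
  esub L R = eadd (emul c1 (esub L1 R1)) (emul c2 (esub L2 R2)) -> L = R.
Proof.
  intros -> -> H. replace L with (eadd (esub L R) R) by ring. rewrite H. ring.
Qed.

Lemma eq_by_combination4 (L R L1 R1 L2 R2 L3 R3 L4 R4 c1 c2 c3 c4 : Ext) :
  L1 = R1 -> L2 = R2 -> L3 = R3 -> L4 = R4 ->
  esub L R = eadd (eadd (emul c1 (esub L1 R1)) (emul c2 (esub L2 R2)))
                  (eadd (emul c3 (esub L3 R3)) (emul c4 (esub L4 R4))) ->
  L = R.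
Proof.
  intros -> -> -> -> H. replace L with (eadd (esub L R) R) by ring. rewrite H. ring.
Qed.

Ltac embed_hyp H :=
  apply (f_equal embed) in H;
  repeat (rewrite embed_add in H || rewrite embed_opp in H || rewrite embed_nsmul in H ||
          rewrite ncst_add in H).
Ltac embed_expand :=
  repeat (rewrite embed_add || rewrite embed_opp || rewrite embed_nsmul ||
          rewrite ncst_add).
Ltac embed_goal := apply embed_inj; embed_expand.

Definition idempotent (p : B) : Prop := mul p p = p.
Definition commutes (t x : B) : Prop := mul t x = mul x t.

Lemma commutes_zero t : commutes t zero.
Proof. unfold commutes. rewrite mul_zero_r, mul_zero_l. reflexivity. Qed.

Lemma commutes_add t x y : commutes t x -> commutes t y -> commutes t (add x y).
Proof. unfold commutes; intros Hx Hy. rewrite mul_addl, mul_addr, Hx, Hy. reflexivity. Qed.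

Lemma commutes_smul t a x : commutes t x -> commutes t (smul a x).
Proof. unfold commutes; intro Hx. rewrite mul_smull, mul_smulr, Hx. reflexivity. Qed.

Lemma commutes_fsum t k f :
  (forall i, (i < k)%nat -> commutes t (f i)) -> commutes t (fsum k f).
Proof.
  induction k as [| k IH]; intro H; simpl.
  - apply commutes_zero.
  - apply commutes_add; auto.
Qed.

Lemma commutes_add_cancel t x y : commutes t x -> commutes t (add x y) -> commutes t y.
Proof.
  unfold commutes; intros Hx Hxy. rewrite mul_addl, mul_addr, Hx in Hxy.
  exact (add_cancel_l _ _ _ Hxy).
Qed.

Lemma commutes_closed t a :
  (forall eps, eps > 0 -> exists y, commutes t y /\ norm (sub a y) < eps) -> commutes t a.
Proof.
  intro Hdense. unfold commutes. apply sub_eq0, zero_of_small_norm. intros eps Heps.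
  pose proof (norm_nonneg t) as Ht.
  destruct (Hdense (eps / (2 * norm t + 1))) as [y [Cy Hy]].
  { apply Rdiv_lt_0_compat; lra. }
  set (d := sub a y) in *.
  assert (Hcomm_d : add (mul t a) (opp (mul a t)) = add (mul t d) (opp (mul d t))).
  { assert (Ea : a = add d y).
    { unfold d, sub. rewrite <- add_assoc, (add_comm (opp y) y), add_opp, add_0.
      reflexivity. }
    rewrite Ea, mul_addl, mul_addr, Cy. embed_goal. ring. }
  (* |t a - a t| = |t d - d t| <= 2 |t| |d| <= eps. *)
  rewrite Hcomm_d.
  pose proof (norm_triangle (mul t d) (opp (mul d t))) as N1. rewrite norm_opp in N1.
  pose proof (norm_submul t d). pose proof (norm_submul d t).
  pose proof (norm_nonneg d).
  assert (norm t * norm d <= norm t * (eps / (2 * norm t + 1)))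
    by (apply Rmult_le_compat_l; lra).
  assert (norm t * (eps / (2 * norm t + 1)) * 2 <= eps).
  { replace (norm t * (eps / (2 * norm t + 1)) * 2)
      with (eps * (2 * norm t / (2 * norm t + 1))) by (field; lra).
    assert (2 * norm t / (2 * norm t + 1) <= 1).
    { apply Rmult_le_reg_r with (2 * norm t + 1); [lra |].
      unfold Rdiv. rewrite Rmult_assoc, Rinv_l by lra. lra. }
    nra. }
  lra.
Qed.

(* If t P + P t = 2 P t P for an idempotent P, then t commutes with P
   (multiply by P on the left, resp. on the right). *)
Lemma idempotent_sandwich_commutes t p :
  idempotent p -> add (mul t p) (mul p t) = add (mul (mul p t) p) (mul (mul p t) p) ->
  commutes t p.
Proof.
  unfold idempotent, commutes. intros Hpp K.
  pose proof (f_equal (mul p) K) as Kl. pose proof (f_equal (fun x => mul x p) K) as Kr.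
  simpl in Kl, Kr.
  rewrite !mul_addr, !mul_assoc, Hpp in Kl. apply add_cancel_l in Kl.
  rewrite !mul_addl, <- !mul_assoc, Hpp, (add_comm (mul t p)) in Kr.
  apply add_cancel_l in Kr.
  rewrite Kr, Kl, mul_assoc. reflexivity.
Qed.

(* For a matrix unit e_ij with i <> j: e_ii + e_ij is again idempotent. *)
Lemma idempotent_add_corner e x :
  idempotent e -> mul e x = x -> mul x e = zero -> mul x x = zero ->
  idempotent (add e x).
Proof.
  unfold idempotent. intros Hee Hex Hxe Hxx.
  rewrite mul_addl, !mul_addr, Hee, Hex, Hxe, Hxx, !add_0. reflexivity.
Qed.

Lemma matrix_unit_commutes (A : B -> Prop) (t : B) (u : MUsys B) :
  (forall x y, A x -> A y -> A (add x y)) ->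
  (forall p, A p -> idempotent p -> commutes t p) ->
  is_mu_system u ->
  (forall s i, (s < mu_r u)%nat -> (i < mu_n u s)%nat -> A (mu_e u s i i)) ->
  forall s i j, idx u s i j -> A (mu_e u s i j) -> commutes t (mu_e u s i j).
Proof.
  intros Hadd Hidem [_ [_ [Hmu _]]] Hdiag s i j [Hs [Hi Hj]] HAe.
  assert (Hii : idx u s i i) by (repeat split; auto).
  assert (Hij : idx u s i j) by (repeat split; auto).
  assert (Pii : idempotent (mu_e u s i i)).
  { unfold idempotent. rewrite (Hmu _ _ _ _ _ _ Hii Hii), !Nat.eqb_refl. reflexivity. }
  assert (Cii : commutes t (mu_e u s i i)) by (apply Hidem; auto).
  destruct (Nat.eq_dec i j) as [<- | Hne]; [exact Cii |].
  assert (Hji : Nat.eqb j i = false) by (apply Nat.eqb_neq; auto).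
  apply (commutes_add_cancel _ _ _ Cii), Hidem; [auto |].
  apply idempotent_add_corner; [exact Pii | ..].
  - rewrite (Hmu _ _ _ _ _ _ Hii Hij), !Nat.eqb_refl. reflexivity.
  - rewrite (Hmu _ _ _ _ _ _ Hij Hii), Hji, Nat.eqb_refl. reflexivity.
  - rewrite (Hmu _ _ _ _ _ _ Hij Hij), Hji, Nat.eqb_refl. reflexivity.
Qed.

Lemma span_commutes (A : B -> Prop) (t : B) (u : MUsys B) :
  (forall x y, A x -> A y -> A (add x y)) ->
  (forall p, A p -> idempotent p -> commutes t p) ->
  is_mu_system u -> csl_part A u ->
  forall y, A y -> in_span u y -> commutes t y.
Proof.
  intros Hadd Hidem Hu [Hdiag Hspan] y Hy Hsp.
  destruct (proj1 (Hspan y) (conj Hy Hsp)) as [c [-> Hc0]].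
  unfold lin_comb.
  apply commutes_fsum; intros s Hs. apply commutes_fsum; intros i Hi.
  apply commutes_fsum; intros j Hj.
  assert (Hidx : idx u s i j) by (repeat split; auto).
  destruct (classic (A (mu_e u s i j))) as [HA | HN].
  - apply commutes_smul, (matrix_unit_commutes A); auto.
  - rewrite (Hc0 s i j Hidx HN), smul_C0. apply commutes_zero.
Qed.

(* A CSL part contains the diagonal units, hence their sum, the identity. *)
Lemma csl_part_one (A : B -> Prop) (u : MUsys B) :
  A zero -> (forall x y, A x -> A y -> A (add x y)) ->
  is_mu_system u -> csl_part A u -> A one.
Proof.
  intros H0 Hadd [_ [_ [_ [_ Hsum]]]] [Hdiag _]. rewrite <- Hsum.
  assert (A_fsum : forall k f, (forall i, (i < k)%nat -> A (f i)) -> A (fsum k f)).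
  { induction k as [| k IH]; intros f Hf; simpl; [exact H0 | apply Hadd; auto]. }
  apply A_fsum; intros s Hs. apply A_fsum; intros i Hi. auto.
Qed.

Section Derivation.
Variables (m n l : nat) (A : B -> Prop) (delta : B -> B).
Hypothesis A_add : forall x y, A x -> A y -> A (add x y).
Hypothesis A_mul : forall x y, A x -> A y -> A (mul x y).
Hypothesis A_one : A one.
Hypothesis delta_add : forall x y, A x -> A y -> delta (add x y) = add (delta x) (delta y).
Hypothesis Hid : forall a, A a ->
  smul (Cnat (m + n + l)) (delta (mul a a)) =
  add (add (smul (Cnat m) (mul (delta a) a)) (smul (Cnat n) (mul a (delta a))))
      (smul (Cnat l) (mul (mul a (delta one)) a)).

(* Linearization: subtract the identity at a from the identity at a + I. *)
Lemma linearized_identity a : A a ->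
  smul (Cnat (m + n + l + l)) (delta a) =
  add (smul (Cnat (m + l)) (mul (delta one) a)) (smul (Cnat (n + l)) (mul a (delta one))).
Proof.
  intro Ha.
  pose proof (Hid a Ha) as H1.
  pose proof (Hid (add a one) (A_add _ _ Ha A_one)) as H2.
  rewrite !mul_addl, !mul_addr, !mul_1l, !mul_1r in H2.
  rewrite (delta_add (add (mul a a) a) (add a one)),
          (delta_add (mul a a) a), (delta_add a one) in H2 by auto.
  rewrite !mul_addl, !mul_addr, ?mul_1l, ?mul_1r, ?mul_assoc in H2.
  embed_hyp H1. embed_hyp H2. embed_goal.
  apply (eq_by_combination2 _ _ _ _ _ _ (eopp e1) e1 H1 H2). ring.
Qed.

Hypothesis Hml : (1 <= m + l)%nat.
Hypothesis Hnl : (1 <= n + l)%nat.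

(* delta(I) commutes with every idempotent P of A: inserting the linearized
   identity into the identity at P gives (m+l)(n+l)(T P + P T - 2 P T P) = 0. *)
Lemma idempotent_commutes p : A p -> idempotent p -> commutes (delta one) p.
Proof.
  intros Hp Hpp. set (T := delta one).
  pose proof (linearized_identity p Hp) as E. fold T in E.
  pose proof (f_equal (fun x => mul x p) E) as Er. pose proof (f_equal (mul p) E) as El.
  simpl in Er, El.
  rewrite mul_smull, mul_addl, !mul_smull, <- (mul_assoc T p p), Hpp in Er.
  rewrite mul_smulr, mul_addr, !mul_smulr, !mul_assoc, Hpp in El.
  pose proof (Hid p Hp) as H. fold T in H. rewrite Hpp in H.
  apply idempotent_sandwich_commutes; [exact Hpp |].
  apply (embed_cancel ((m + l) * (n + l))); [nia |].
  embed_hyp E. embed_hyp Er. embed_hyp El. embed_hyp H.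
  rewrite ncst_mul. embed_expand.
  apply (eq_by_combination4 _ _ _ _ _ _ _ _ _ _
    (eadd (eadd (eadd (ncst m) (ncst n)) (ncst l)) (ncst l))
    (eopp (eadd (eadd (ncst m) (ncst n)) (ncst l))) (ncst m) (ncst n) H E Er El).
  ring.
Qed.

Lemma delta_left_mult a : A a -> commutes (delta one) a -> delta a = mul (delta one) a.
Proof.
  intros Ha Ca. pose proof (linearized_identity a Ha) as E.
  unfold commutes in Ca. rewrite <- Ca, nsmul_add in E.
  replace (m + l + (n + l))%nat with (m + n + l + l)%nat in E by lia.
  exact (nsmul_inj (m + n + l + l) _ _ ltac:(lia) E).
Qed.

End Derivation.
End Algebra.

Theorem theorem3p8 (m n l : nat) (Hml : (1 <= m + l)%nat) (Hnl : (1 <= n + l)%nat)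
  (B : CstarAlgebra) (A : B -> Prop)
  (HAF : is_AF B) (HA : canonical_subalgebra B A)
  (delta : B -> B) (Hlin : linear_on B A delta) (Hbd : bounded_on B A delta)
  (Hid : forall a, A a ->
     smul (Cnat (m + n + l)) (delta (mul a a)) =
     add (add (smul (Cnat m) (mul (delta a) a)) (smul (Cnat n) (mul a (delta a))))
         (smul (Cnat l) (mul (mul a (delta one)) a))) :
  forall a b, A a -> A b ->
    delta (mul a b) = mul (delta a) b /\ mul (delta a) b = mul a (delta b).
Proof.
  intros a b Ha Hb.
  destruct HA as [[A_zero [A_add [_ [A_mul _]]]] [ch [[Hsys _] [Hcsl Hdense]]]].
  destruct Hlin as [delta_add _].
  assert (A_one : A one) by exact (csl_part_one B A (ch 0%nat) A_zero A_add (Hsys _) (Hcsl _)).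
  pose proof (idempotent_commutes B m n l A delta A_add A_mul A_one delta_add Hid Hml Hnl)
    as Hidem.
  (* delta(I) commutes with all of A: with each A_k, hence with their dense union. *)
  assert (Hcomm : forall x, A x -> commutes B (delta one) x).
  { intros x Hx. apply commutes_closed. intros eps Heps.
    destruct (Hdense x Hx eps Heps) as [k [y [Hy [Hsp Hnorm]]]].
    exists y. split; [| exact Hnorm].
    exact (span_commutes B A _ (ch k) A_add Hidem (Hsys k) (Hcsl k) y Hy Hsp). }
  assert (Hleft : forall x, A x -> delta x = mul (delta one) x).
  { intros x Hx. exact (delta_left_mult B m n l A delta A_add A_mul A_one delta_add Hid
                          Hml Hnl x Hx (Hcomm x Hx)). }
  rewrite (Hleft (mul a b)), (Hleft a), (Hleft b) by auto.
  split; [apply mul_assoc |].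
  rewrite !mul_assoc, (Hcomm a Ha). reflexivity.
Qed.
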